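(* Let $A_0\in\mathbb{R}^{n\times n}$, $B\in\mathbb{R}^{n\times1}$, $K\in\mathbb{R}^{1\times n}$, $h\in\mathbb{R}$, $P_0\in\mathbb{R}^{n\times n}$ symmetric, and let $V(x)=\tfrac12\big(x^\top P_0x+h(x^\top K^\top Kx-\mathrm{dz}(Kx)^2)\big)$. Suppose the matching condition $P_0B-hA_0^\top K^\top=\mu K^\top$ holds for some $\mu\ge0$, and that $2\mu+\omega>0$ where $\omega:=2hKB$. Then, with $S_0:=-(A_0^\top P_0+P_0A_0)$, the directional derivative of $V$ along $\dot x=A_0x-B\,\mathrm{sat}(Kx)$ satisfies, for almost all $x\in\mathbb{R}^n$, $$\dot V(x)=-\tfrac12\begin{bmatrix}x\\ \mathrm{dz}(Kx)\end{bmatrix}^\top Q\begin{bmatrix}x\\ \mathrm{dz}(Kx)\end{bmatrix},\qquad Q=\begin{bmatrix}S_0+(2\mu+\omega)K^\top K&-(\mu+\omega)K^\top\\ -(\mu+\omega)K&\omega\end{bmatrix}.$$ Moreover, if in addition $P_0\succeq0$, $A_0^\top P_0+P_0A_0\preceq0$ and $\ker P_0\subseteq\ker A_0$, then there exist $T_0\ge0$ and $R>0$ such that $\tfrac12 Q-\Sigma_0-\Sigma_R\succeq0$; in particular $-\dot V(x)\ge R\,\mathrm{sat}(Kx)^2$ for almost all $x$.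
   Context: Single-input case: $\mathrm{sat}(s)=\min\{\overline{u},\max\{-\underline{u},s\}\}$ with $\overline{u},\underline{u}>0$, $\mathrm{dz}(s)=s-\mathrm{sat}(s)$. For scalars $T_0,R$: $\Sigma_0=\begin{bmatrix}0&K^\top T_0\\ T_0K&-2T_0\end{bmatrix}$, $\Sigma_R=\begin{bmatrix}K^\top RK&-K^\top R\\ -RK&R\end{bmatrix}$. *)

From HB Require Import structures.
From mathcomp Require Import all_boot all_order all_algebra.
From mathcomp Require Import all_classical all_reals all_analysis.
Set Implicit Arguments. Unset Strict Implicit. Unset Printing Implicit Defensive.
Import Order.TTheory GRing.Theory Num.Theory.
Import numFieldNormedType.Exports.
Local Open Scope ring_scope.

Section Defs.
Variable R : realType.

Definition sat (ub lb s : R) : R := Num.min ub (Num.max (- lb) s).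
Definition dz (ub lb s : R) : R := s - sat ub lb s.

Definition sc {n} (K : 'rV[R]_n) (x : 'cV[R]_n) : R := (K *m x) ord0 ord0.

Definition quad {m} (M : 'M[R]_m) (z : 'cV[R]_m) : R := (z^T *m M *m z) ord0 ord0.

Definition psd {m} (M : 'M[R]_m) : Prop := forall z : 'cV[R]_m, 0 <= quad M z.

Definition ker_sub {n} (M1 M2 : 'M[R]_n) : Prop :=
  forall v : 'cV[R]_n, M1 *m v = 0 -> M2 *m v = 0.

Definition dirder {n} (V : 'cV[R]_n -> R) (x v : 'cV[R]_n) : R :=
  derive (fun t : R => V (x + t *: v)) 0 1.
Definition dirderivable {n} (V : 'cV[R]_n -> R) (x v : 'cV[R]_n) : Prop :=
  derivable (fun t : R => V (x + t *: v)) 0 1.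

Definition Vfun {n} (ub lb h : R) (P0 : 'M[R]_n) (K : 'rV[R]_n) (x : 'cV[R]_n) : R :=
  (1/2) * (quad P0 x + h * (quad (K^T *m K) x - (dz ub lb (sc K x)) ^+ 2)).

Definition field {n} (ub lb : R) (A0 : 'M[R]_n) (B : 'cV[R]_n) (K : 'rV[R]_n)
  (x : 'cV[R]_n) : 'cV[R]_n := A0 *m x - sat ub lb (sc K x) *: B.

Definition omega {n} (h : R) (K : 'rV[R]_n) (B : 'cV[R]_n) : R := 2 * h * sc K B.

Definition S0 {n} (A0 P0 : 'M[R]_n) : 'M[R]_n := - (A0^T *m P0 + P0 *m A0).

Definition Qmat {n} (A0 P0 : 'M[R]_n) (K : 'rV[R]_n) (mu w : R) : 'M[R]_(n + 1) :=
  block_mx (S0 A0 P0 + (2 * mu + w) *: (K^T *m K)) (- (mu + w) *: K^T)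
           (- (mu + w) *: K) (w%:M).

Definition Sigma0 {n} (K : 'rV[R]_n) (T0 : R) : 'M[R]_(n + 1) :=
  block_mx 0 (K^T *m T0%:M) (T0%:M *m K) ((-2 * T0)%:M).

Definition SigmaR {n} (K : 'rV[R]_n) (Rr : R) : 'M[R]_(n + 1) :=
  block_mx (K^T *m Rr%:M *m K) (- (K^T *m Rr%:M)) (- (Rr%:M *m K)) (Rr%:M).

Definition zvec {n} (ub lb : R) (K : 'rV[R]_n) (x : 'cV[R]_n) : 'cV[R]_(n + 1) :=
  col_mx x (dz ub lb (sc K x))%:M.

End Defs.

(* Along any direction, V is differentiable: its only non-quadratic part,
   dz(Kx)^2, is C^1 with derivative 2 dz(Kx) because dz vanishes at its two
   corners.  The matching condition P0 B = mu K^T + h A0^T K^T collapses the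
   derivative along the flow to
     -1/2 x^T S0 x - mu (Kx) sat(Kx) - omega/2 sat(Kx)^2,
   which is -1/2 z^T Q z for z = [x; dz(Kx)].  For T0 = mu/2 and R = mu + omega/2
   one has exactly Q/2 - Sigma0 - SigmaR = diag(S0/2, 0); splitting Kx as
   sat(Kx) + dz(Kx), the sector condition dz(s) sat(s) >= 0 then yields
   -dV >= R sat(Kx)^2. *)

From HB Require Import structures.
From mathcomp Require Import all_boot all_order all_algebra.
From mathcomp Require Import all_classical all_reals all_analysis.
From mathcomp Require Import ring lra.
Set Implicit Arguments. Unset Strict Implicit. Unset Printing Implicit Defensive.
Import Order.TTheory GRing.Theory Num.Theory.
Import numFieldNormedType.Exports.
Local Open Scope ring_scope.

Section Saturation.
Variables (R : realType) (ub lb : R).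
Hypotheses (ub_gt0 : 0 < ub) (lb_gt0 : 0 < lb).
Local Notation sat := (sat ub lb).
Local Notation dz := (dz ub lb).

Lemma sat_dz_cases y :
  [/\ y <= - lb, dz y = y + lb & sat y = - lb] \/
  [/\ - lb <= y <= ub, dz y = 0 & sat y = y] \/
  [/\ ub <= y, dz y = y - ub & sat y = ub].
Proof.
have lb_le_ub : - lb <= ub by move: ub_gt0 lb_gt0; lra.
rewrite /dz /sat; have [ylb|lby] := lerP y (- lb).
  by left; rewrite min_r ?opprK.
have [yub|uby] := lerP y ub.
  by right; left; rewrite subrr; split=> //; apply/andP; split; lra.
by right; right; split=> //; lra.
Qed.

Lemma sub_dz y : y - dz y = sat y.
Proof. by rewrite /dz subKr. Qed.

Lemma dz_mul_sat_ge0 y : 0 <= dz y * sat y.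
Proof.
move: (ub_gt0) (lb_gt0) => ? ?.
have [[? -> ->]|[[_ -> _]|[? -> ->]]] := sat_dz_cases y; nra.
Qed.

Lemma dz_sqr_remainder y t : `|dz (y + t) ^+ 2 - dz y ^+ 2 - 2 * dz y * t| <= t ^+ 2.
Proof.
move: (ub_gt0) (lb_gt0) => ? ?; rewrite ler_norml.
have [[? -> _]|[[/andP[? ?] -> _]|[? -> _]]] := sat_dz_cases y;
have [[? -> _]|[[/andP[? ?] -> _]|[? -> _]]] := sat_dz_cases (y + t);
  apply/andP; split; nra.
Qed.

End Saturation.

Section Derivative.
Local Open Scope classical_set_scope.

Lemma derive_sqr_remainder (R : realType) (f : R -> R) (D C : R) :
  (forall t, `|f t - f 0 - D * t| <= C * t ^+ 2) ->
  derivable f 0 1 /\ derive f 0 1 = D.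
Proof.
move=> f_rem.
have C_ge0 : 0 <= C.
  by have := f_rem 1; rewrite expr1n !mulr1; apply: le_trans.
have quot_cvg : (fun t => t^-1 *: ((f \o shift 0) (t *: 1) - f 0)) @ 0^' --> D.
  apply/cvgrPdist_le => e e_gt0.
  have eC_gt0 : 0 < e / (C + 1) by apply: divr_gt0 => //; lra.
  near=> t.
  have t_neq0 : t != 0 by near: t; exact: nbhs_dnbhs_neq.
  have t_small : `|t| < e / (C + 1).
    near: t; apply: (@nbhs_dnbhs R 0).
    by exists (e / (C + 1)) => // y; rewrite /ball /= sub0r normrN.
  have -> : (f \o shift 0) t%:A = f t.
    by rewrite /= /shift addr0; congr f; exact: mulr1.
  rewrite -[_ *: _]/(t^-1 * (f t - f 0)).
  have -> : D - t^-1 * (f t - f 0) = - (t^-1 * (f t - f 0 - D * t)) by field.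
  have t_gt0 : 0 < `|t| by rewrite normr_gt0.
  rewrite normrN normrM normrV ?unitfE // ler_pdivrMl //.
  apply: (le_trans (f_rem t)); rewrite -real_normK ?num_real //.
  have : `|t| * (C + 1) < e by rewrite -ltr_pdivlMr //; lra.
  nra.
split; first by apply/cvg_ex; exists D.
exact: cvg_lim.
Unshelve. all: by end_near.
Qed.

End Derivative.

Section QuadraticForms.
Variable R : realType.

Definition bil {m} (M : 'M[R]_m) (u w : 'cV[R]_m) : R := (u^T *m M *m w) ord0 ord0.

Lemma mx11_mul (a b : 'M[R]_1) : (a *m b) ord0 ord0 = a ord0 ord0 * b ord0 ord0.
Proof. by rewrite mxE big_ord1. Qed.

Lemma mx11D (a b : 'M[R]_1) : (a + b) ord0 ord0 = a ord0 ord0 + b ord0 ord0.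
Proof. by rewrite mxE. Qed.

Lemma mx11Z c (a : 'M[R]_1) : (c *: a) ord0 ord0 = c * a ord0 ord0.
Proof. by rewrite mxE. Qed.

Lemma mx11_tr (a : 'M[R]_1) : a^T ord0 ord0 = a ord0 ord0.
Proof. by rewrite mxE. Qed.

Section Fixed.
Variable m : nat.
Implicit Types (u w : 'cV[R]_m) (M N : 'M[R]_m) (K : 'rV[R]_m).

Lemma bilDl M u1 u2 w : bil M (u1 + u2) w = bil M u1 w + bil M u2 w.
Proof. by rewrite /bil linearD /= !mulmxDl mxE. Qed.

Lemma bilDr M u w1 w2 : bil M u (w1 + w2) = bil M u w1 + bil M u w2.
Proof. by rewrite /bil !mulmxDr mxE. Qed.

Lemma bilZl M c u w : bil M (c *: u) w = c * bil M u w.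
Proof. by rewrite /bil linearZ /= -!scalemxAl mxE. Qed.

Lemma bilZr M c u w : bil M u (c *: w) = c * bil M u w.
Proof. by rewrite /bil -!scalemxAr mxE. Qed.

Lemma bilBr M u w1 w2 : bil M u (w1 - w2) = bil M u w1 - bil M u w2.
Proof. by rewrite bilDr -scaleN1r bilZr mulN1r. Qed.

Lemma bil_trmx M u w : bil M u w = bil M^T w u.
Proof. by rewrite /bil -mx11_tr !trmx_mul trmxK mulmxA. Qed.

Lemma quad_mulmx M N u : quad (M *m N) u = bil M u (N *m u).
Proof. by rewrite /quad /bil !mulmxA. Qed.

Lemma quad_trmx_mulmx M N u : quad (M^T *m N) u = bil N (M *m u) u.
Proof. by rewrite /quad /bil !mulmxA trmx_mul. Qed.

Lemma scD K u w : sc K (u + w) = sc K u + sc K w.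
Proof. by rewrite /sc mulmxDr mxE. Qed.

Lemma scZ K c u : sc K (c *: u) = c * sc K u.
Proof. by rewrite /sc -scalemxAr mxE. Qed.

Lemma scB K u w : sc K (u - w) = sc K u - sc K w.
Proof. by rewrite scD -scaleN1r scZ mulN1r. Qed.

Lemma sc_trmx K u : (u^T *m K^T) ord0 ord0 = sc K u.
Proof. by rewrite -trmx_mul mx11_tr. Qed.

Lemma quad_rank1 K u : quad (K^T *m K) u = sc K u ^+ 2.
Proof. by rewrite /quad mulmxA -mulmxA mx11_mul sc_trmx expr2. Qed.

Lemma quadD M N u : quad (M + N) u = quad M u + quad N u.
Proof. by rewrite /quad mulmxDr mulmxDl mxE. Qed.

Lemma quadZ c M u : quad (c *: M) u = c * quad M u.
Proof. by rewrite /quad -scalemxAr -scalemxAl mxE. Qed.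

Lemma quadN M u : quad (- M) u = - quad M u.
Proof. by rewrite -scaleN1r quadZ mulN1r. Qed.

Lemma quad_block M (b : 'cV[R]_m) (c : 'rV[R]_m) (e d : R) u :
  quad (block_mx M b c e%:M) (col_mx u d%:M) =
  quad M u + d * (u^T *m b) ord0 ord0 + d * (c *m u) ord0 ord0 + e * d ^+ 2.
Proof.
rewrite /quad tr_col_mx mul_row_block mul_row_col tr_scalar_mx !mulmxDl.
rewrite !mul_scalar_mx !mul_mx_scalar -scalemxAl !mx11D !mx11Z.
by rewrite [e%:M _ _]mxE eqxx mulr1n; ring.
Qed.

Lemma quad_block_diag k M (u : 'cV[R]_m) (y : 'cV[R]_k) :
  quad (block_mx M 0 0 0) (col_mx u y) = quad M u.
Proof.
by rewrite /quad tr_col_mx mul_row_block mul_row_col !mulmx0 !addr0 mul0mx addr0.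
Qed.

End Fixed.
End QuadraticForms.

Section LureSystem.
Variables (R : realType) (n : nat) (ub lb : R).
Variables (A0 P0 : 'M[R]_n) (B : 'cV[R]_n) (K : 'rV[R]_n).
Implicit Types (x v : 'cV[R]_n) (mu w d : R).

Lemma quad_Qmat mu w x d :
  quad (Qmat A0 P0 K mu w) (col_mx x d%:M) =
  quad (S0 A0 P0) x + (2 * mu + w) * sc K x ^+ 2 - 2 * (mu + w) * sc K x * d
  + w * d ^+ 2.
Proof.
rewrite /Qmat quad_block quadD quadZ quad_rank1.
rewrite -scalemxAr -scalemxAl !mx11Z sc_trmx -/(sc K x); ring.
Qed.

Lemma quad_S0 x : P0^T = P0 -> quad (S0 A0 P0) x = - 2 * bil P0 x (A0 *m x).
Proof.
move=> P0_sym; rewrite /S0 quadN quadD quad_trmx_mulmx quad_mulmx.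
by rewrite bil_trmx P0_sym; ring.
Qed.

Lemma bil_matching h mu x :
  P0 *m B - h *: (A0^T *m K^T) = mu *: K^T ->
  bil P0 x B = mu * sc K x + h * sc K (A0 *m x).
Proof.
move=> matching; have P0B : P0 *m B = mu *: K^T + h *: (A0^T *m K^T).
  by rewrite -matching subrK.
rewrite /bil -mulmxA P0B mulmxDr -!scalemxAr mx11D !mx11Z sc_trmx mulmxA.
by rewrite -trmx_mul sc_trmx.
Qed.

Lemma Qmat_sub_Sigma mu w :
  (1/2) *: Qmat A0 P0 K mu w - Sigma0 K (mu / 2) - SigmaR K (mu + w / 2)
  = block_mx ((1/2) *: S0 A0 P0) 0 0 0.
Proof.
have half2 : 1 / 2 * (2 * mu + w) = mu + w / 2 by field.
have off0 : 1 / 2 * - (mu + w) - mu / 2 + (mu + w / 2) = 0 by field.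
have corner0 : 1 / 2 * w - -2 * (mu / 2) - (mu + w / 2) = 0 by field.
rewrite /Qmat /Sigma0 /SigmaR scale_block_mx !opp_block_mx !add_block_mx.
rewrite !mul_mx_scalar !mul_scalar_mx -!scalemxAl !scalerDr !scalerA.
rewrite half2 subr0 addrK; congr block_mx.
- by rewrite opprK -!scalerBl -scalerDl off0 scale0r.
- by rewrite opprK -!scalerBl -scalerDl off0 scale0r.
rewrite -[w%:M]scalemx1 -[(-2 * _)%:M]scalemx1 -[(mu + _)%:M]scalemx1.
by rewrite scalerA -!scalerBl corner0 scale0r.
Qed.

Lemma psd_Qmat_sub_Sigma mu w :
  psd (S0 A0 P0) ->
  psd ((1/2) *: Qmat A0 P0 K mu w - Sigma0 K (mu / 2) - SigmaR K (mu + w / 2)).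
Proof.
move=> S0_psd z; rewrite Qmat_sub_Sigma -[z]vsubmxK quad_block_diag quadZ.
by apply: mulr_ge0 => //; lra.
Qed.

Section Lyapunov.
Variable h : R.
Hypotheses (ub_gt0 : 0 < ub) (lb_gt0 : 0 < lb).
Local Notation V := (Vfun ub lb h P0 K).

Lemma dirder_Vfun x v :
  dirderivable V x v /\
  dirder V x v = (bil P0 x v + bil P0 v x) / 2 + h * sat ub lb (sc K x) * sc K v.
Proof.
set s := sc K x; set k := sc K v; set d := dz ub lb s.
have V_line t : V (x + t *: v) =
    (1/2) * (quad P0 x + t * (bil P0 x v + bil P0 v x) + t ^+ 2 * quad P0 v
             + h * ((s + t * k) ^+ 2 - dz ub lb (s + t * k) ^+ 2)).
  rewrite /Vfun quad_rank1 scD scZ -/s -/k /quad -!/(bil _ _ _).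
  rewrite !(bilDl, bilDr, bilZl, bilZr); congr (_ * _); ring.
rewrite -sub_dz -/d.
have [] := @derive_sqr_remainder R (fun t => V (x + t *: v))
  ((bil P0 x v + bil P0 v x) / 2 + h * (s - d) * k)
  ((1/2) * (`|quad P0 v| + 2 * `|h| * k ^+ 2)); last by split.
move=> t /=.
have -> : V (x + 0 *: v) = (1/2) * (quad P0 x + h * (s ^+ 2 - d ^+ 2)).
  by rewrite scale0r addr0 /Vfun quad_rank1.
rewrite V_line.
have e_le := dz_sqr_remainder ub_gt0 lb_gt0 s (t * k); rewrite -/d in e_le.
set e := _ - _ - _ in e_le.
have -> : (1/2) * (quad P0 x + t * (bil P0 x v + bil P0 v x) + t ^+ 2 * quad P0 v
      + h * ((s + t * k) ^+ 2 - dz ub lb (s + t * k) ^+ 2))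
    - (1/2) * (quad P0 x + h * (s ^+ 2 - d ^+ 2))
    - ((bil P0 x v + bil P0 v x) / 2 + h * (s - d) * k) * t
    = (1/2) * (t ^+ 2 * quad P0 v + h * t ^+ 2 * k ^+ 2 - h * e).
  by rewrite /e; field.
move: e_le; rewrite !ler_norml => /andP[e_lo e_hi].
have := ler_norm (quad P0 v); have := ler_normr (quad P0 v).
have t2_ge0 : 0 <= t ^+ 2 by rewrite sqr_ge0.
have [a0|a0] := ger0P (quad P0 v); have [h0|h0] := ger0P h;
  move=> *; apply/andP; split; nra.
Qed.

Variable mu : R.
Hypotheses (P0_sym : P0^T = P0)
  (matching : P0 *m B - h *: (A0^T *m K^T) = mu *: K^T).
Local Notation sigma x := (sat ub lb (sc K x)).

Lemma dirder_Vfun_field x :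
  dirderivable V x (field ub lb A0 B K x) /\
  dirder V x (field ub lb A0 B K x) =
    - (1/2) * quad (S0 A0 P0) x - mu * sc K x * sigma x
    - omega h K B / 2 * sigma x ^+ 2.
Proof.
have [V_der ->] := dirder_Vfun x (field ub lb A0 B K x); split=> //.
rewrite [bil P0 (field _ _ _ _ _ _) x]bil_trmx P0_sym quad_S0 //.
by rewrite /field bilBr bilZr (bil_matching x matching) scB scZ /omega; field.
Qed.

Lemma dirder_Vfun_Qmat x :
  dirderivable V x (field ub lb A0 B K x) /\
  dirder V x (field ub lb A0 B K x) =
    - (1/2) * quad (Qmat A0 P0 K mu (omega h K B)) (zvec ub lb K x).
Proof.
have [V_der ->] := dirder_Vfun_field x; split=> //.
by rewrite /zvec quad_Qmat -sub_dz; field.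
Qed.

Lemma Vfun_decrease x :
  0 <= mu -> psd (S0 A0 P0) ->
  (mu + omega h K B / 2) * sigma x ^+ 2 <= - dirder V x (field ub lb A0 B K x).
Proof.
move=> mu_ge0 S0_psd; have [_ ->] := dirder_Vfun_field x.
have split_Kx : sc K x = sigma x + dz ub lb (sc K x) by rewrite -sub_dz subrK.
have := S0_psd x; have := dz_mul_sat_ge0 ub_gt0 lb_gt0 (sc K x).
rewrite [X in mu * X * _]split_Kx => /(mulr_ge0 mu_ge0) sector quad_ge0.
nra.
Qed.

End Lyapunov.

End LureSystem.

Theorem lemma2 (R : realType) (n : nat) (ub lb : R)
    (A0 : 'M[R]_n) (B : 'cV[R]_n) (K : 'rV[R]_n) (h : R) (P0 : 'M[R]_n) (mu : R) :
  0 < ub -> 0 < lb ->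
  P0^T = P0 ->
  P0 *m B - h *: (A0^T *m K^T) = mu *: K^T ->
  0 <= mu ->
  0 < 2 * mu + omega h K B ->
  (forall x : 'cV[R]_n,
      dirderivable (Vfun ub lb h P0 K) x (field ub lb A0 B K x) /\
      dirder (Vfun ub lb h P0 K) x (field ub lb A0 B K x) =
        - (1/2) * quad (Qmat A0 P0 K mu (omega h K B)) (zvec ub lb K x)) /\
  (psd P0 -> psd (- (A0^T *m P0 + P0 *m A0)) -> ker_sub P0 A0 ->
   exists T0 Rr : R, 0 <= T0 /\ 0 < Rr /\
     psd ((1/2) *: Qmat A0 P0 K mu (omega h K B) - Sigma0 K T0 - SigmaR K Rr) /\
     (forall x : 'cV[R]_n,
        - dirder (Vfun ub lb h P0 K) x (field ub lb A0 B K x)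
          >= Rr * (sat ub lb (sc K x)) ^+ 2)).
Proof.
move=> ub_gt0 lb_gt0 P0_sym matching mu_ge0 rate_gt0.
split=> [x|_ S0_psd _]; first exact: dirder_Vfun_Qmat.
exists (mu / 2), (mu + omega h K B / 2).
split; first by rewrite divr_ge0.
split; first by lra.
split; first exact: psd_Qmat_sub_Sigma.
by move=> x; apply: Vfun_decrease.
Qed.
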